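(* Consider an affine multiple yield curve model (as defined in the context). Then for all $0\le t\le T\le\mathbb{T}$ and $i\in\{1,\dots,m\}$, $$B(t,T)=\mathbb{E}[B_t/B_T\mid\mathcal{F}_t]=\mathbb{E}[e^{Z_T-Z_t}\mid\mathcal{F}_t]=e^{\phi(T-t,0,0,1)+\langle\psi(T-t,0,0,1),X_t\rangle}$$ and $$S^{\delta_i}(t,T)=\frac{\mathbb{E}[e^{Z_T+u_i^\top Y_T}\mid\mathcal{F}_t]}{\mathbb{E}[e^{Z_T}\mid\mathcal{F}_t]}=e^{u_i^\top Y_t+\phi(T-t,0,u_i,1)-\phi(T-t,0,0,1)+\langle\psi(T-t,0,u_i,1)-\psi(T-t,0,0,1),X_t\rangle}.$$
   Context: Fix a horizon $\mathbb{T}>0$ and a filtered probability space $(\Omega,\mathcal{F},(\mathcal{F}_t)_{0\le t\le\mathbb{T}},\mathbb{Q})$, $\mathbb{Q}$ a risk neutral measure under which OIS bond prices $B(t,T)$ discounted by the OIS bank account $B_t$ are martingales, i.e. $B(t,T)=\mathbb{E}[B_t/B_T\mid\mathcal{F}_t]$; expectations are under $\mathbb{Q}$. $\mathbb{Q}^T$ denotes the $T$-forward measure, $\frac{d\mathbb{Q}^T}{d\mathbb{Q}}|_{\mathcal{F}_t}=\frac{B(t,T)}{B_tB(0,T)}$, and for each tenor $\delta_i$ the multiplicative spreads $(S^{\delta_i}(t,T))_{t\in[0,T]}$ are $\mathbb{Q}^T$-martingales, so $S^{\delta_i}(t,T)=\mathbb{E}^{\mathbb{Q}^T}[S^{\delta_i}(T,T)\mid\mathcal{F}_t]$.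 Affine multiple yield curve model: a process $\mathcal{X}=(X,Y,Z)$ with state space $D=D_X\times\mathbb{R}^{n+1}$, $D_X$ a closed convex subset of a real Euclidean space $V$ with inner product $\langle\cdot,\cdot\rangle$, such that (A1) $\mathcal{X}$ is a stochastically continuous time-homogeneous Markov process on $D$, and (A2) there are functions $\phi,\psi$ with $\mathbb{E}[e^{\langle v,X_t\rangle+u^\top Y_t+wZ_t}]=e^{\phi(t,v,u,w)+\langle\psi(t,v,u,w),x\rangle+u^\top y+wz}$ for all initial states $(x,y,z)\in D$, $t\in[0,\mathbb{T}]$ and $(v,u,w)\in\mathfrak{U}:=\{\zeta\in(V+\mathrm{i}V)\times\mathbb{C}^{n+1}:\mathbb{E}[e^{\langle\zeta,\mathcal{X}_t\rangle}]<\infty\ \forall t\in[0,\mathbb{T}]\}$; vectors $u_0=0,u_1,\dots,u_m\in\mathbb{R}^n$ with $(0,u_i,1)\in\mathfrak{U}$ for $i=0,\dots,m$; OIS bank account $B_t=e^{-Z_t}=e^{\int_0^tr_sds}$ with $r_t=l+\langle\lambda,X_t\rangle$, $l\in\mathbb{R}$, $\lambda\in V$; spot spreads $S^{\delta_i}(t,t)=e^{u_i^\top Y_t}$, $i=1,\dots,m$. *)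

From HB Require Import structures.
From mathcomp Require Import all_boot all_order all_algebra.
From mathcomp Require Import all_classical all_reals all_analysis.
Unset Printing Implicit Defensive.
Import Order.TTheory GRing.Theory Num.Theory.
Import numFieldNormedType.Exports.
Local Open Scope classical_set_scope.
Local Open Scope ring_scope.

Section AffineMYC.
Context {R : realType}.

Definition dotv {k : nat} (a b : 'rV[R]_k) : R := \sum_(j < k) a 0 j * b 0 j.

Definition state (k n : nat) := ('rV[R]_k * 'rV[R]_n * R)%type.

(* Borel sigma-algebra on the state space: generated by the coordinates. *)
Definition coord_gen (k n : nat) : set (set (state k n)) :=
  [set A | exists B : set R, measurable B /\
     ((exists j : 'I_k, A = (fun s : state k n => s.1.1 0 j) @^-1` B) \/
      (exists j : 'I_n, A = (fun s : state k n => s.1.2 0 j) @^-1` B) \/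
      A = (fun s : state k n => s.2) @^-1` B)].
Definition state_meas (k n : nat) : set (set (state k n)) := <<s coord_gen k n >>.

Definition meas_wrt {T : Type} (G : set (set T)) (f : T -> R) : Prop :=
  forall B : set R, measurable B -> G (f @^-1` B).

Definition sdist {k n : nat} (a b : state k n) : R :=
  \sum_(j < k) `|a.1.1 0 j - b.1.1 0 j| + \sum_(j < n) `|a.1.2 0 j - b.1.2 0 j|
  + `|a.2 - b.2|.

Definition convex_rV {k : nat} (C : set 'rV[R]_k) : Prop :=
  forall a b, C a -> C b -> forall l : R, 0 <= l <= 1 -> C (l *: a + (1 - l) *: b).

Definition aff_expo {k n : nat} (v : 'rV[R]_k) (u : 'rV[R]_n) (w : R) (s : state k n) : R :=
  dotv v s.1.1 + dotv u s.1.2 + w * s.2.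

Context {d : measure_display} {Omega : measurableType d}.

Definition is_condexp (P : probability Omega R) (G : set (set Omega)) (H g : Omega -> R) : Prop :=
  meas_wrt G g /\
  forall A, G A -> (\int[P]_(w in A) (g w)%:E = \int[P]_(w in A) (H w)%:E)%E.

(* g is a version of E_{P'}[H | G] where dP' = rho dP *)
Definition is_condexp_dens (P : probability Omega R) (rho : Omega -> R)
    (G : set (set Omega)) (H g : Omega -> R) : Prop :=
  meas_wrt G g /\
  forall A, G A ->
    (\int[P]_(w in A) (g w * rho w)%:E = \int[P]_(w in A) (H w * rho w)%:E)%E.

Definition filtration (TT : R) (F : R -> set (set Omega)) : Prop :=
  (forall t, 0 <= t <= TT -> sigma_algebra setT (F t) /\ F t `<=` measurable) /\
  (forall s t, 0 <= s -> s <= t -> t <= TT -> F s `<=` F t).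

Context {k n : nat}.

Definition markov_family (TT : R) (F : R -> set (set Omega)) (D : set (state k n))
    (Xp : R -> Omega -> state k n) (Qx : state k n -> probability Omega R) : Prop :=
  [/\ (forall t, 0 <= t <= TT -> forall A, state_meas k n A -> F t (Xp t @^-1` A)),
      (forall x, D x -> (Qx x).-negligible [set w | Xp 0 w <> x]),
      (forall x, D x -> forall t, 0 <= t <= TT ->
          (Qx x).-negligible [set w | ~ D (Xp t w)]) &
      (forall x, D x -> forall t s, 0 <= t -> 0 <= s -> t + s <= TT ->
        forall f : state k n -> R, meas_wrt (state_meas k n) f ->
        (exists M : R, forall y, `|f y| <= M) ->
        is_condexp (Qx x) (F t) (fun w => f (Xp (t + s) w))
          (fun w => fine (\int[Qx (Xp t w)]_v (f (Xp s v))%:E)))].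

Definition stoch_continuous (TT : R) (D : set (state k n))
    (Xp : R -> Omega -> state k n) (Qx : state k n -> probability Omega R) : Prop :=
  forall x, D x -> forall t, 0 <= t <= TT -> forall eps eta : R, 0 < eps -> 0 < eta ->
    exists delta : R, 0 < delta /\
      forall s, 0 <= s <= TT -> `|s - t| < delta ->
        (Qx x [set w | (eps < sdist (Xp s w) (Xp t w))%R] < eta%:E)%E.

(* real part of the set U: exponential moments finite for all t and all initial states *)
Definition Ureal (TT : R) (D : set (state k n)) (Xp : R -> Omega -> state k n)
    (Qx : state k n -> probability Omega R) (v : 'rV[R]_k) (u : 'rV[R]_n) (w : R) : Prop :=
  forall x, D x -> forall t, 0 <= t <= TT ->
    (\int[Qx x]_om (expR (aff_expo v u w (Xp t om)))%:E < +oo)%E.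

Definition affine_property (TT : R) (D : set (state k n)) (Xp : R -> Omega -> state k n)
    (Qx : state k n -> probability Omega R)
    (phi : R -> 'rV[R]_k -> 'rV[R]_n -> R -> R)
    (psi : R -> 'rV[R]_k -> 'rV[R]_n -> R -> 'rV[R]_k) : Prop :=
  forall v u w, Ureal TT D Xp Qx v u w -> forall x, D x -> forall t, 0 <= t <= TT ->
    (\int[Qx x]_om (expR (aff_expo v u w (Xp t om)))%:E =
    (expR (phi t v u w + dotv (psi t v u w) x.1.1 + dotv u x.1.2 + w * x.2))%:E)%E.

Definition short_rate (TT : R) (D : set (state k n)) (Xp : R -> Omega -> state k n)
    (Qx : state k n -> probability Omega R) (l : R) (lam : 'rV[R]_k) : Prop :=
  forall x, D x -> (Qx x).-negligible
    [set om | exists t, 0 <= t <= TT /\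
       ((Xp 0 om).2 - (Xp t om).2)%:E <>
       (\int[@lebesgue_measure R]_(s in (`[0%R, t] : set R)) (l + dotv lam (Xp s om).1.1)%:E)%E].

End AffineMYC.

From HB Require Import structures.
From mathcomp Require Import all_boot all_order all_algebra.
From mathcomp Require Import all_classical all_reals all_analysis.
From mathcomp Require Import measurable_realfun ring lra.
Import Order.TTheory GRing.Theory Num.Theory.
Import numFieldNormedType.Exports.
Local Open Scope classical_set_scope.
Local Open Scope ring_scope.

(* Under Q_x0, the Markov property combined with the affine transform formula (A2)
   gives E[e^{u^T Y_T + Z_T} | F_t] = E_{X_t}[e^{u^T Y_{T-t} + Z_{T-t}}]
   = exp(phi(T-t,0,u,1) + <psi(T-t,0,u,1), X_t> + u^T Y_t + Z_t), first for bounded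
   truncations and then by monotone convergence. Pulling the F_t-measurable factor
   e^{-Z_t} out of the conditional expectation (u = 0) gives the bond price. The T-forward
   measure has density B(T,T)/(B_T B(0,T)) = e^{Z_T}/B(0,T), so the spread, a
   conditional expectation of e^{u_i^T Y_T} under it, is the ratio of the conditional
   moments for u = u_i and u = 0. Each identity is obtained by exhibiting an explicit
   version of a conditional expectation and using that versions agree almost surely. *)

(** * Versions of conditional expectations *)

Section sub_sigma_algebra.
Context {R : realType} {d : measure_display} {T : measurableType d}.
Context {G : set (set T)}.
Hypotheses (sG : sigma_algebra setT G) (Gm : G `<=` measurable).

Lemma g_sigma_measurableE : @measurable _ (g_sigma_algebraType G) = G.
Proof. exact: sigma_algebra_id. Qed.

Lemma meas_wrtP {f : T -> R} :
  meas_wrt G f <-> measurable_fun (T:=g_sigma_algebraType G) (U:=R) setT f.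
Proof.
rewrite /meas_wrt; split=> [mf _ B mB|mf B mB].
  by rewrite setTI g_sigma_measurableE; exact: mf.
by have := mf measurableT B mB; rewrite setTI g_sigma_measurableE.
Qed.

Lemma meas_wrt_measurable {f : T -> R} : meas_wrt G f -> measurable_fun setT f.
Proof. by move=> mf _ B mB; rewrite setTI; apply: Gm; exact: mf. Qed.

End sub_sigma_algebra.

Section condexp_unique.
Context {R : realType} {d : measure_display} {T : measurableType d}.
Variable Q : probability T R.

Lemma negligible_integral_le0 (E : set T) (w : T -> R) :
  measurable E -> measurable_fun E w -> (forall x, E x -> 0 < w x) ->
  (\int[Q]_(x in E) (w x)%:E <= 0)%E -> Q.-negligible E.
Proof.
move=> mE mw w0 le0.
have : (\int[Q]_(x in E) `|(w x)%:E| = 0)%E.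
  apply/eqP; rewrite eq_le integral_ge0 ?andbT // (le_trans _ le0) //.
  rewrite le_eqVlt; apply/orP; left; apply/eqP/eq_integral => x /set_mem Ex.
  by rewrite abse_EFin gtr0_norm // w0.
have mwE : measurable_fun E (EFin \o w) by exact/measurable_EFinP.
move/(ae_eq_integral_abs Q mE mwE) => [N [mN N0 sub]].
exists N; split => // x Ex; apply: sub => /= /(_ Ex) [] /eqP.
by rewrite gt_eqF // w0.
Qed.

Lemma negligible_weighted_gap (E : set T) (g1 g2 w : T -> R) (M eps : R) :
  measurable E -> measurable_fun setT g1 -> measurable_fun setT g2 ->
  measurable_fun setT w -> (forall x, 0 < w x) -> Q.-integrable setT (EFin \o w) ->
  0 < eps -> (forall x, E x -> [/\ `|g1 x| <= M, `|g2 x| <= M & eps <= g2 x - g1 x]) ->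
  (\int[Q]_(x in E) (g1 x * w x)%:E = \int[Q]_(x in E) (g2 x * w x)%:E)%E ->
  Q.-negligible E.
Proof.
move=> mE mg1 mg2 mw w0 iw eps0 gap g12.
have intE (g : T -> R) : measurable_fun setT g -> (forall x, E x -> `|g x| <= M) ->
    Q.-integrable E (fun x => (g x * w x)%:E).
  move=> mg gM; apply: (le_integrable mE (g := fun x => (M%:E * (EFin \o w) x)%E)).
  - apply/measurable_EFinP.
    by apply: measurable_funM; [exact: measurable_funS mg|exact: measurable_funS mw].
  - move=> x Ex /=; rewrite lee_fin !normrM ler_wpM2r //.
    exact: le_trans (gM x Ex) (ler_norm M).
  - exact/integrableZl/(integrableS measurableT).
have i1 := intE g1 mg1 (fun x Ex => let: And3 h _ _ := gap x Ex in h).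
have i2 := intE g2 mg2 (fun x Ex => let: And3 _ h _ := gap x Ex in h).
apply: (@negligible_integral_le0 _ (fun x => eps * w x) mE).
- by apply: measurable_funM => //; exact: measurable_funS mw.
- by move=> x _; rewrite mulr_gt0.
rewrite -(subee (integrable_fin_num mE i2)) -{2}g12 -integralB_EFin //.
apply: le_integral => //.
- rewrite (_ : (fun x => _) = (fun x => eps%:E * (EFin \o w) x)%E).
    exact/integrableZl/(integrableS measurableT).
  by apply/funext => x; rewrite EFinM.
- exact: integrableB.
move=> x /set_mem Ex; have [_ _ epsg] := gap x Ex.
by rewrite -EFinB lee_fin -mulrBl ler_wpM2r // ltW.
Qed.

Variable G : set (set T).
Hypotheses (sG : sigma_algebra setT G) (Gm : G `<=` measurable).
Local Notation GT := (g_sigma_algebraType G).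

Lemma negligible_lt_weighted_integral_eq (g1 g2 w : T -> R) :
  meas_wrt G g1 -> meas_wrt G g2 ->
  measurable_fun setT w -> (forall x, 0 < w x) -> Q.-integrable setT (EFin \o w) ->
  (forall A, G A -> \int[Q]_(x in A) (g1 x * w x)%:E = \int[Q]_(x in A) (g2 x * w x)%:E)%E ->
  Q.-negligible [set x | g1 x < g2 x].
Proof.
move=> mg1 mg2 mw w0 iw g12.
have mg1T := meas_wrt_measurable Gm mg1; have mg2T := meas_wrt_measurable Gm mg2.
pose E m := [set x | `|g1 x| <= m%:R] `&` [set x | `|g2 x| <= m%:R] `&`
            [set x | m.+1%:R^-1 <= g2 x - g1 x].
have GE m : G (E m).
  move/(meas_wrtP sG): mg1 => mg1G; move/(meas_wrtP sG): mg2 => mg2G.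
  have mle (f g : GT -> R) : measurable_fun setT f -> measurable_fun setT g ->
      measurable [set x | f x <= g x].
    by move=> mf mg; rewrite -[X in measurable X]setTI; exact: measurable_fun_le.
  have : measurable (E m : set GT).
    apply: measurableI; first apply: measurableI; apply: mle => //;
      exact: measurableT_comp || exact: measurable_funB.
  by rewrite g_sigma_measurableE.
have NE m : Q.-negligible (E m).
  apply: (negligible_weighted_gap _ _ _ _ m%:R m.+1%:R^-1 (Gm _ (GE m)) mg1T mg2T
    mw w0 iw) => //; last exact: g12 (GE m).
  by move=> x [[]].
apply: (negligibleS _ (negligible_bigcup NE)) => x /= lt12.
have gap0 : 0 < (g2 x - g1 x)^-1 by rewrite invr_gt0 subr_gt0.
pose m := Num.truncn (`|g1 x| + `|g2 x| + (g2 x - g1 x)^-1).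
have hm : `|g1 x| + `|g2 x| + (g2 x - g1 x)^-1 < m.+1%:R by rewrite truncnS_gt.
have n1 := normr_ge0 (g1 x); have n2 := normr_ge0 (g2 x).
exists m.+1 => //; split; first by split; rewrite /=; lra.
rewrite /= -(invrK (g2 x - g1 x)) lef_pV2 ?posrE ?invr_gt0 ?subr_gt0 // -natr1.
lra.
Qed.

Lemma is_condexp_dens_ae_unique {rho H g1 g2 : T -> R} :
  measurable_fun setT rho -> (forall x, 0 < rho x) -> Q.-integrable setT (EFin \o rho) ->
  is_condexp_dens Q rho G H g1 -> is_condexp_dens Q rho G H g2 ->
  Q.-negligible [set x | g1 x <> g2 x].
Proof.
move=> mrho rho0 irho [mg1 hg1] [mg2 hg2].
have g12 A : G A -> (\int[Q]_(x in A) (g1 x * rho x)%:E =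
                     \int[Q]_(x in A) (g2 x * rho x)%:E)%E.
  by move=> GA; rewrite hg1 // hg2.
have N12 := negligible_lt_weighted_integral_eq _ _ _ mg1 mg2 mrho rho0 irho g12.
have N21 := negligible_lt_weighted_integral_eq _ _ _ mg2 mg1 mrho rho0 irho
  (fun A GA => esym (g12 A GA)).
apply: (negligibleS _ (negligibleU N12 N21)).
by move=> x /= /eqP; rewrite neq_lt => /orP[]; [left|right].
Qed.

Lemma is_condexp_dens1 (H g : T -> R) :
  is_condexp Q G H g -> is_condexp_dens Q (cst 1) G H g.
Proof.
move=> [mg hg]; split => // A GA.
rewrite (eq_integral (fun x => (g x)%:E)) => [|x _]; last by rewrite /cst mulr1.
by rewrite hg //; apply: eq_integral => x _; rewrite /cst mulr1.
Qed.

Lemma is_condexp_ae_unique {H g1 g2 : T -> R} :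
  is_condexp Q G H g1 -> is_condexp Q G H g2 -> Q.-negligible [set x | g1 x <> g2 x].
Proof.
move=> /is_condexp_dens1 h1 /is_condexp_dens1 h2.
apply: (is_condexp_dens_ae_unique _ _ _ h1 h2) => //.
exact: finite_measure_integrable_cst.
Qed.

End condexp_unique.

Lemma is_condexp_dens_ae_dens {R : realType} {d : measure_display} {T : measurableType d}
    {Q : probability T R} {G : set (set T)} {rho1 rho2 H g : T -> R} :
  G `<=` measurable -> measurable_fun setT rho1 -> measurable_fun setT rho2 ->
  measurable_fun setT H -> Q.-negligible [set x | rho1 x <> rho2 x] ->
  is_condexp_dens Q rho1 G H g -> is_condexp_dens Q rho2 G H g.
Proof.
move=> Gm mrho1 mrho2 mH [N [mN N0 sub]] [mg gH]; split => // A GA.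
have mA : measurable A := Gm _ GA.
have swap (f : T -> R) : measurable_fun setT f ->
    (\int[Q]_(x in A) (f x * rho1 x)%:E = \int[Q]_(x in A) (f x * rho2 x)%:E)%E.
  move=> mf; apply: ae_eq_integral => //.
  - by apply/measurable_EFinP; apply: measurable_funS (measurable_funM mf mrho1).
  - by apply/measurable_EFinP; apply: measurable_funS (measurable_funM mf mrho2).
  exists N; split => // x /= hx; apply: sub => /= e; apply: hx => _; by rewrite e.
by rewrite -!swap ?gH //; exact: meas_wrt_measurable mg.
Qed.

Section condexp_pullout.
Import HBNNSimple.
Context {R : realType} {d : measure_display} {T : measurableType d}.
Variable Q : probability T R.
Context {G : set (set T)}.
Hypotheses (sG : sigma_algebra setT G) (Gm : G `<=` measurable).
Local Notation GT := (g_sigma_algebraType G).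
Variables (g H : T -> R).
Hypotheses (mg : measurable_fun setT g) (mH : measurable_fun setT H).
Hypotheses (g0 : forall x, 0 <= g x) (H0 : forall x, 0 <= H x).
Hypothesis gH : forall A, G A ->
  (\int[Q]_(x in A) (g x)%:E = \int[Q]_(x in A) (H x)%:E)%E.

Lemma integral_indic_mul_eq (c : R) (S B : set T) :
  G S -> G B -> (forall x, 0 <= c * \1_S x) ->
  (\int[Q]_(x in B) (c * \1_S x * g x)%:E = \int[Q]_(x in B) (c * \1_S x * H x)%:E)%E.
Proof.
move=> GS GB cS0; have [c_lt0|c_ge0] := ltP c 0.
  have cS x : c * \1_S x = 0.
    by move: (cS0 x); rewrite indicE; case: (x \in S); rewrite ?mulr0 // mulr1 leNgt c_lt0.
  by apply: eq_integral => x _; rewrite cS !mul0r.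
have restrict (f : T -> R) : measurable_fun setT f -> (forall x, 0 <= f x) ->
    (\int[Q]_(x in B) (c * \1_S x * f x)%:E = c%:E * \int[Q]_(x in B `&` S) (f x)%:E)%E.
  move=> mf f0; rewrite integral_mkcondr epatch_indic -ge0_integralZl //.
  - by apply: eq_integral => x _ /=; rewrite -!EFinM; congr EFin; ring.
  - exact: Gm.
  - apply/measurable_EFinP; apply: measurable_funM; first exact: measurable_funS mf.
    exact/measurable_indic/Gm.
  - by move=> x _ /=; rewrite -EFinM lee_fin mulr_ge0 // indicE; case: (_ \in _).
rewrite (restrict g) // (restrict H) // gH //.
have : measurable (B `&` S : set GT).
  by apply: measurableI; rewrite g_sigma_measurableE.
by rewrite g_sigma_measurableE.
Qed.

Lemma integral_nnsfun_mul_eq (s : {nnsfun GT >-> R}) (B : set T) : G B ->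
  (\int[Q]_(x in B) (s x * g x)%:E = \int[Q]_(x in B) (s x * H x)%:E)%E.
Proof.
move=> GB; pose r := finmap.enum_fset (fset_set (range s)).
pose c i := r`_i; pose S i := (s : T -> R) @^-1` [set c i].
have GS i : G (S i).
  by have := measurable_funPTI s (measurable_set1 (c i)); rewrite g_sigma_measurableE.
have cS0 i x : 0 <= c i * \1_(S i) x.
  by rewrite indicE; case: (boolP (x \in S i)) => [/set_mem /= <-|_];
    rewrite ?mulr1 ?mulr0.
have decompose (f : T -> R) : measurable_fun setT f -> (forall x, 0 <= f x) ->
    (\int[Q]_(x in B) (s x * f x)%:E =
     \sum_(i < size r) \int[Q]_(x in B) (c i * \1_(S i) x * f x)%:E)%E.
  move=> mf f0; rewrite -ge0_integral_sum //.
  - by apply: eq_integral => x _; rewrite sumEFin {1}(fimfunEord s x) mulr_suml.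
  - exact: Gm.
  - move=> i; apply/measurable_EFinP; apply: measurable_funM; last exact: measurable_funS mf.
    by apply: measurable_funM => //; exact/measurable_indic/Gm.
  - by move=> i x _; rewrite lee_fin mulr_ge0.
rewrite (decompose g) // (decompose H) //; apply: eq_bigr => i _.
exact: integral_indic_mul_eq.
Qed.

Lemma integral_mul_eq (p : T -> R) : meas_wrt G p -> (forall x, 0 <= p x) ->
  forall B, G B ->
  (\int[Q]_(x in B) (p x * g x)%:E = \int[Q]_(x in B) (p x * H x)%:E)%E.
Proof.
move=> /(meas_wrtP sG) mp p0 B GB; have mB : measurable B := Gm _ GB.
have mpE : measurable_fun (T:=GT) setT (EFin \o p) by exact/measurable_EFinP.
pose s := nnsfun_approx measurableT mpE.
have approx (f : T -> R) : measurable_fun setT f -> (forall x, 0 <= f x) ->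
    (\int[Q]_(x in B) (p x * f x)%:E =
     limn (fun n => \int[Q]_(x in B) (s n x * f x)%:E))%E.
  move=> mf f0; rewrite -monotone_convergence //.
  - apply: eq_integral => x _; apply/esym/cvg_lim => //.
    rewrite EFinM; under eq_fun do rewrite EFinM.
    by apply: cvgeZr => //; apply: (cvg_nnsfun_approx measurableT mpE) => // y _; rewrite lee_fin.
  - move=> n; apply/measurable_EFinP; apply: measurable_funM; last exact: measurable_funS mf.
    apply: measurable_funS (meas_wrt_measurable Gm _) => //.
    by apply/(meas_wrtP sG); exact: measurable_funPT.
  - by move=> n x _; rewrite lee_fin mulr_ge0.
  - move=> x _ m n mn; rewrite lee_fin ler_wpM2r //.
    by move/lefP: (nd_nnsfun_approx measurableT mpE mn); apply.
rewrite (approx g) // (approx H) //.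
by under eq_fun => n do rewrite (integral_nnsfun_mul_eq (s n) _ GB).
Qed.

End condexp_pullout.

Lemma is_condexp_mull {R : realType} {d : measure_display} {T : measurableType d}
    (Q : probability T R) (G : set (set T)) (p H g : T -> R) :
  sigma_algebra setT G -> G `<=` measurable ->
  meas_wrt G p -> (forall x, 0 <= p x) ->
  measurable_fun setT H -> (forall x, 0 <= H x) -> (forall x, 0 <= g x) ->
  is_condexp Q G H g -> is_condexp Q G (fun x => p x * H x) (fun x => p x * g x).
Proof.
move=> sG Gm mp p0 mH H0 g0 [mg gH]; split.
  by apply/(meas_wrtP sG); apply: measurable_funM; apply/(meas_wrtP sG).
exact: (integral_mul_eq Q sG Gm _ _ (meas_wrt_measurable Gm mg) mH g0 H0 gH _ mp p0).
Qed.

Lemma measurable_inv {R : realType} : measurable_fun [set: R] (@GRing.inv R).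
Proof.
have -> : (@GRing.inv R) = (fun x => if x == 0 then 0 else x^-1).
  by apply/funext => x; case: eqP => [->|//]; rewrite invr0.
apply: measurable_fun_if => //; first exact: measurable_fun_eqr.
rewrite setTI (_ : _ @^-1` _ = [set x | x != 0]); last by apply/seteqP; split => x /=; case: eqP.
apply: open_continuous_measurable_fun; first exact: open_neq.
by move=> x /set_mem /= x0; apply: inv_continuous.
Qed.

(** * Measurability on the state space *)

Section state_measurable.
Context {R : realType} {k n : nat}.
Local Notation ST := (g_sigma_algebraType (@coord_gen R k n)).

Lemma measurable_state_Z : measurable_fun (T:=ST) (U:=R) setT (fun s => s.2).
Proof.
move=> _ B mB; rewrite setTI; apply: sub_sigma_algebra.
by exists B; split => //; right; right.
Qed.

Lemma measurable_dotv_X (a : 'rV[R]_k) :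
  measurable_fun (T:=ST) (U:=R) setT (fun s => dotv a s.1.1).
Proof.
apply: measurable_sum => j; apply: measurable_funM => // _ B mB.
by rewrite setTI; apply: sub_sigma_algebra; exists B; split => //; left; exists j.
Qed.

Lemma measurable_dotv_Y (a : 'rV[R]_n) :
  measurable_fun (T:=ST) (U:=R) setT (fun s => dotv a s.1.2).
Proof.
apply: measurable_sum => j; apply: measurable_funM => // _ B mB.
by rewrite setTI; apply: sub_sigma_algebra; exists B; split => //; right; left; exists j.
Qed.

Lemma meas_wrt_state (f : state k n -> R) :
  measurable_fun (T:=ST) setT f -> meas_wrt (state_meas k n) f.
Proof. by move=> mf B mB; have := mf measurableT B mB; rewrite setTI. Qed.

End state_measurable.

Lemma dot0v {R : realType} {m : nat} (b : 'rV[R]_m) : dotv 0 b = 0.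
Proof. by rewrite /dotv big1 // => j _; rewrite mxE mul0r. Qed.

Lemma dotvBl {R : realType} {m : nat} (a c b : 'rV[R]_m) :
  dotv (a - c) b = dotv a b - dotv c b.
Proof. by rewrite /dotv -sumrB; apply: eq_bigr => j _; rewrite !mxE mulrBl. Qed.

Lemma aff_expo_Y_Z {R : realType} {k n : nat} (u : 'rV[R]_n) (y : @state R k n) :
  aff_expo 0 u 1 y = dotv u y.1.2 + y.2.
Proof. by rewrite /aff_expo dot0v add0r mul1r. Qed.

Ltac state_measurable := repeat first
  [ exact: measurable_cst | exact: measurable_state_Z
  | exact: measurable_dotv_X | exact: measurable_dotv_Y
  | apply: measurable_funD | apply: measurable_funB
  | apply: measurable_funM | apply: measurable_funN
  | apply: measurableT_comp; first exact: measurable_expR ].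

Lemma measurable_expR_aff_expo {R : realType} {k n : nat} v u (w : R) :
  measurable_fun (T:=g_sigma_algebraType (@coord_gen R k n)) setT
    (fun y => expR (aff_expo v u w y)).
Proof. rewrite /aff_expo; state_measurable. Qed.

(** * Affine multiple yield curve models *)

Section affine_model.
Context {R : realType} {d : measure_display} {Omega : measurableType d} {k n : nat}.
Local Notation ST := (g_sigma_algebraType (@coord_gen R k n)).
Context {TT : R} {DX : set 'rV[R]_k} {F : R -> set (set Omega)}
  {Xp : R -> Omega -> @state R k n} {Qx : @state R k n -> probability Omega R}
  {phi : R -> 'rV[R]_k -> 'rV[R]_n -> R -> R}
  {psi : R -> 'rV[R]_k -> 'rV[R]_n -> R -> 'rV[R]_k}.
Local Notation D := [set s : @state R k n | DX s.1.1].
Hypotheses (hF : filtration TT F) (hM : markov_family TT F D Xp Qx)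
  (hA : affine_property TT D Xp Qx phi psi).

Lemma filtration_sigma_algebra {t} : 0 <= t <= TT -> sigma_algebra setT (F t).
Proof. by move=> ht; case: hF => /(_ t ht) []. Qed.

Lemma filtration_sub {t} : 0 <= t <= TT -> F t `<=` measurable.
Proof. by move=> ht; case: hF => /(_ t ht) []. Qed.

Lemma meas_wrt_Xp {t} {f : @state R k n -> R} : 0 <= t <= TT ->
  measurable_fun (T:=ST) setT f -> meas_wrt (F t) (fun w => f (Xp t w)).
Proof.
move=> ht /meas_wrt_state mf B mB; case: hM => adapted _ _ _.
exact: (adapted t ht (f @^-1` B) (mf B mB)).
Qed.

Lemma measurable_Xp {t} {f : @state R k n -> R} : 0 <= t <= TT ->
  measurable_fun (T:=ST) setT f -> measurable_fun setT (fun w => f (Xp t w)).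
Proof.
by move=> ht mf; exact: (meas_wrt_measurable (filtration_sub ht) (meas_wrt_Xp ht mf)).
Qed.

Section markov_nonneg.
Context {x : @state R k n} {t s : R}.
Hypotheses (Dx : D x) (t0 : 0 <= t) (s0 : 0 <= s) (tsTT : t + s <= TT).
Context {f : @state R k n -> R}.
Hypotheses (mf : measurable_fun (T:=ST) setT f) (f0 : forall y, 0 <= f y).

Let ht : 0 <= t <= TT. Proof. by rewrite t0 (le_trans _ tsTT) // lerDl. Qed.
Let hs : 0 <= s <= TT. Proof. by rewrite s0 (le_trans _ tsTT) // lerDr. Qed.
Let hts : 0 <= t + s <= TT. Proof. by rewrite tsTT andbT addr_ge0. Qed.

(* [markov_family] states the Markov property for bounded functionals only; it extends
   to nonnegative ones by monotone convergence along the truncations [trunc N]. *)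
Let trunc N y := Num.min (f y) N%:R.

Let measurable_trunc N : measurable_fun (T:=ST) setT (trunc N).
Proof. exact: measurable_minr. Qed.

Let trunc_ge0 N y : 0 <= trunc N y.
Proof. by rewrite le_min f0 ler0n. Qed.

Let trunc_nd y : {homo trunc^~ y : N M / (N <= M)%N >-> N <= M}.
Proof. by move=> N M NM; rewrite le_min2 // ler_nat. Qed.

Let cvg_trunc y : (fun N => (trunc N y)%:E) @ \oo --> (f y)%:E.
Proof.
apply: cvg_near_cst; exists (Num.truncn (f y)).+1 => // N /= hN.
congr EFin; apply/min_l/ltW/(lt_le_trans (truncnS_gt _)); by rewrite ler_nat.
Qed.

Let inner N w := (\int[Qx (Xp t w)]_v (trunc N (Xp s v))%:E)%E.

Let inner_fin_num N w : inner N w \is a fin_num.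
Proof.
rewrite ge0_fin_numE; last by apply: integral_ge0 => v _; rewrite lee_fin.
apply: (@le_lt_trans _ _ (\int[Qx (Xp t w)]_v (cst (N%:R)%:E v))%E).
  apply: ge0_le_integral => //.
  - by move=> v _; rewrite lee_fin.
  - exact/measurable_EFinP/(measurable_Xp hs).
  - by move=> v _; rewrite lee_fin ge_min lexx orbT.
rewrite integral_cst // ltey_eq fin_numM // ge0_fin_numE ?measure_ge0 //.
exact: le_lt_trans (probability_le1 (Qx _) measurableT) (ltry 1).
Qed.

Let markov_trunc N :
  is_condexp (Qx x) (F t) (fun w => trunc N (Xp (t + s) w)) (fun w => fine (inner N w)).
Proof.
case: hM => _ _ _ markov; apply: markov => //; first exact: meas_wrt_state.
by exists N%:R => y; rewrite ger0_norm // ge_min lexx orbT.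
Qed.

Let measurable_inner N : measurable_fun setT (inner N).
Proof.
rewrite (_ : inner N = EFin \o (fun w => fine (inner N w))).
  exact/measurable_EFinP/(meas_wrt_measurable (filtration_sub ht) (markov_trunc N).1).
by apply/funext => w /=; rewrite fineK.
Qed.

Let inner_nd w : {homo inner^~ w : N M / (N <= M)%N >-> (N <= M)%E}.
Proof.
move=> N M NM; apply: ge0_le_integral => //.
- by move=> v _; rewrite lee_fin.
- exact/measurable_EFinP/(measurable_Xp hs).
- exact/measurable_EFinP/(measurable_Xp hs).
- by move=> v _; rewrite lee_fin trunc_nd.
Qed.

Let cvg_inner w :
  (\int[Qx (Xp t w)]_v (f (Xp s v))%:E)%E = limn (fun N => inner N w).
Proof.
rewrite -monotone_convergence //.
- by apply: eq_integral => v _; apply/esym/cvg_lim => //; exact: cvg_trunc.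
- by move=> N; exact/measurable_EFinP/(measurable_Xp hs).
- by move=> N v _; rewrite lee_fin.
- by move=> v _ N M NM; rewrite lee_fin trunc_nd.
Qed.

Lemma measurable_markov_integral :
  measurable_fun setT (fun w => \int[Qx (Xp t w)]_v (f (Xp s v))%:E)%E.
Proof.
under eq_fun do rewrite cvg_inner.
apply: (emeasurable_fun_cvg inner) => // w _.
by apply: ereal_nondecreasing_is_cvgn; exact: inner_nd.
Qed.

Lemma markov_integral_ge0 A : F t A ->
  (\int[Qx x]_(w in A) (f (Xp (t + s) w))%:E =
   \int[Qx x]_(w in A) \int[Qx (Xp t w)]_v (f (Xp s v))%:E)%E.
Proof.
move=> FA; have mA := filtration_sub ht _ FA.
transitivity (limn (fun N => \int[Qx x]_(w in A) (trunc N (Xp (t + s) w))%:E)%E).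
  rewrite -monotone_convergence //.
  - by apply: eq_integral => w _; apply/esym/cvg_lim => //; exact: cvg_trunc.
  - by move=> N; exact/measurable_EFinP/measurable_funS/(measurable_Xp hts).
  - by move=> N w _; rewrite lee_fin.
  - by move=> w _ N M NM; rewrite lee_fin trunc_nd.
under eq_fun do rewrite -(markov_trunc _).2 //.
under eq_integral do rewrite cvg_inner.
rewrite monotone_convergence //.
- by apply: congr_lim; apply/funext => N; apply: eq_integral => w _; rewrite fineK.
- by move=> N; exact: measurable_funS (measurable_inner N).
- by move=> N w _; apply: integral_ge0 => v _; rewrite lee_fin.
Qed.

End markov_nonneg.

(* By (A2), [exp_moment s u y] is the expectation of [e^{u^T Y_s + Z_s}] started at [y]. *)
Definition exp_moment (s : R) (u : 'rV[R]_n) (y : @state R k n) : R :=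
  expR (phi s 0 u 1 + dotv (psi s 0 u 1) y.1.1 + dotv u y.1.2 + 1 * y.2).

Definition affine_bond (s : R) (y : @state R k n) : R :=
  expR (phi s 0 0 1 + dotv (psi s 0 0 1) y.1.1).

Definition affine_spread (s : R) (u : 'rV[R]_n) (y : @state R k n) : R :=
  expR (dotv u y.1.2 + phi s 0 u 1 - phi s 0 0 1 + dotv (psi s 0 u 1 - psi s 0 0 1) y.1.1).

Lemma measurable_exp_moment s u : measurable_fun (T:=ST) setT (exp_moment s u).
Proof. rewrite /exp_moment; state_measurable. Qed.

Lemma measurable_affine_spread s u : measurable_fun (T:=ST) setT (affine_spread s u).
Proof. rewrite /affine_spread; state_measurable. Qed.

Lemma exp_moment_spread s u y : exp_moment s u y = affine_spread s u y * exp_moment s 0 y.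
Proof. by rewrite /exp_moment /affine_spread -expRD dotvBl dot0v; congr expR; ring. Qed.

Lemma affine_condexp {x0 u} {t T : R} : D x0 -> Ureal TT D Xp Qx 0 u 1 ->
  0 <= t -> t <= T -> T <= TT ->
  is_condexp (Qx x0) (F t) (fun w => expR (aff_expo 0 u 1 (Xp T w)))
    (fun w => exp_moment (T - t) u (Xp t w)).
Proof.
move=> Dx0 hU t0 tT TTT.
have ht : 0 <= t <= TT by rewrite t0 (le_trans tT).
have hs : 0 <= T - t <= TT by rewrite subr_ge0 tT /=; lra.
split; first exact: meas_wrt_Xp ht (measurable_exp_moment _ _).
move=> A FA; have mA := filtration_sub ht _ FA.
have me := @measurable_expR_aff_expo R k n 0 u 1.
have s0 : 0 <= T - t by rewrite subr_ge0.
have tsTT : t + (T - t) <= TT by rewrite addrC subrK.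
have e0 (y : @state R k n) : 0 <= expR (aff_expo 0 u 1 y) by exact: expR_ge0.
have := markov_integral_ge0 Dx0 t0 s0 tsTT me e0 _ FA.
rewrite addrC subrK => ->; apply: ae_eq_integral => //.
- exact/measurable_EFinP/measurable_funS/(measurable_Xp ht (measurable_exp_moment _ _)).
- exact: measurable_funS (measurable_markov_integral Dx0 t0 s0 tsTT me e0).
case: hM => _ _ inD _; have [N [mN N0 sub]] := inD x0 Dx0 t ht.
exists N; split => // w /= hw; apply: sub => /= DXt; apply: hw => _.
by rewrite (hA _ _ _ hU _ DXt _ hs).
Qed.

Lemma affine_condexp_mull {x0 u} {t T : R} {p : Omega -> R} :
  D x0 -> Ureal TT D Xp Qx 0 u 1 -> 0 <= t -> t <= T -> T <= TT ->
  meas_wrt (F t) p -> (forall w, 0 <= p w) ->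
  is_condexp (Qx x0) (F t) (fun w => p w * expR (aff_expo 0 u 1 (Xp T w)))
    (fun w => p w * exp_moment (T - t) u (Xp t w)).
Proof.
move=> Dx0 hU t0 tT TTT mp p0; have ht : 0 <= t <= TT by rewrite t0 (le_trans tT).
have hT : 0 <= T <= TT by rewrite TTT (le_trans t0).
apply: (is_condexp_mull _ _ _ _ _ (filtration_sigma_algebra ht) (filtration_sub ht) mp p0
  (measurable_Xp hT (measurable_expR_aff_expo 0 u 1))).
- by move=> w; exact: expR_ge0.
- by move=> w; exact: expR_ge0.
- exact: (affine_condexp Dx0 hU t0 tT TTT).
Qed.

Lemma bond_condexp {x0} {t T : R} : D x0 -> Ureal TT D Xp Qx 0 0 1 ->
  0 <= t -> t <= T -> T <= TT ->
  is_condexp (Qx x0) (F t) (fun w => expR ((Xp T w).2 - (Xp t w).2))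
    (fun w => affine_bond (T - t) (Xp t w)).
Proof.
move=> Dx0 hU0 t0 tT TTT; have ht : 0 <= t <= TT by rewrite t0 (le_trans tT).
have mZ : measurable_fun (T:=ST) setT (fun y : @state R k n => expR (- y.2)).
  by state_measurable.
have := affine_condexp_mull Dx0 hU0 t0 tT TTT (meas_wrt_Xp ht mZ) (fun w => expR_ge0 _).
congr is_condexp; apply/funext => w; rewrite -expRD; congr expR.
  by rewrite aff_expo_Y_Z dot0v; ring.
by rewrite /exp_moment /affine_bond dot0v; ring.
Qed.

Lemma spread_condexp_dens {x0 u} {t T c : R} :
  D x0 -> Ureal TT D Xp Qx 0 u 1 -> Ureal TT D Xp Qx 0 0 1 -> 0 < c ->
  0 <= t -> t <= T -> T <= TT ->
  is_condexp_dens (Qx x0) (fun w => expR (Xp T w).2 / c) (F t)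
    (fun w => expR (dotv u (Xp T w).1.2))
    (fun w => affine_spread (T - t) u (Xp t w)).
Proof.
move=> Dx0 hU hU0 c0 t0 tT TTT; have ht : 0 <= t <= TT by rewrite t0 (le_trans tT).
have sG := filtration_sigma_algebra ht.
have mq := meas_wrt_Xp ht (measurable_affine_spread (T - t) u).
have mc : meas_wrt (F t) (cst c^-1) by exact/(meas_wrtP sG).
have mqc : meas_wrt (F t) (fun w => affine_spread (T - t) u (Xp t w) / c).
  by apply/(meas_wrtP sG); apply: measurable_funM => //; exact/(meas_wrtP sG).
have cV0 : 0 <= c^-1 by rewrite invr_ge0 ltW.
have [_ hu] := affine_condexp_mull Dx0 hU t0 tT TTT mc (fun=> cV0).
have [_ h0] := affine_condexp_mull Dx0 hU0 t0 tT TTT mqc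
  (fun w => divr_ge0 (expR_ge0 _) (ltW c0)).
split => // B GB; rewrite (eq_integral (fun w => (affine_spread (T - t) u (Xp t w) / c *
    expR (aff_expo 0 0 1 (Xp T w)))%:E)); last first.
  by move=> w _; rewrite aff_expo_Y_Z dot0v add0r; congr EFin; ring.
rewrite -h0 // (eq_integral (fun w => (cst c^-1 w * exp_moment (T - t) u (Xp t w))%:E)).
  rewrite hu //; apply: eq_integral => w _.
  by rewrite aff_expo_Y_Z expRD /cst; congr EFin; ring.
by move=> w _; rewrite (exp_moment_spread _ u) /cst; congr EFin; ring.
Qed.

Lemma integrable_expR_Z {x0} {T c : R} : D x0 -> Ureal TT D Xp Qx 0 0 1 ->
  0 <= T <= TT -> 0 < c ->
  (Qx x0).-integrable setT (EFin \o (fun w => expR (Xp T w).2 / c)).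
Proof.
move=> Dx0 hU0 hT c0.
have mZ : measurable_fun (T:=ST) setT (fun y : @state R k n => expR y.2) by state_measurable.
apply/integrableP; split.
  by apply/measurable_EFinP; apply: measurable_funM => //; exact: measurable_Xp hT mZ.
rewrite (eq_integral (fun w => (c^-1)%:E * (expR (aff_expo 0 0 1 (Xp T w)))%:E)%E).
  rewrite ge0_integralZl ?lee_fin ?invr_ge0 ?(ltW c0) //.
    by rewrite lte_mul_pinfty ?lee_fin ?invr_ge0 ?(ltW c0) // hU0.
  exact/measurable_EFinP/(measurable_Xp hT (measurable_expR_aff_expo 0 0 1)).
move=> w _ /=; rewrite ger0_norm ?divr_ge0 ?expR_ge0 ?(ltW c0) //.
by rewrite aff_expo_Y_Z dot0v add0r -EFinM mulrC.
Qed.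

Section pricing.
Context {x0 : @state R k n} {Bp : R -> R -> Omega -> R}.
Hypotheses (Dx0 : D x0) (hU0 : Ureal TT D Xp Qx 0 0 1).
Hypothesis hBp : forall t T : R, 0 <= t -> t <= T -> T <= TT ->
  is_condexp (Qx x0) (F t) (fun w => expR (- (Xp t w).2) / expR (- (Xp T w).2)) (Bp t T).

Lemma bond_condexp_Z {t T : R} : 0 <= t -> t <= T -> T <= TT ->
  is_condexp (Qx x0) (F t) (fun w => expR ((Xp T w).2 - (Xp t w).2)) (Bp t T).
Proof.
move=> t0 tT TTT; have := hBp _ _ t0 tT TTT; congr is_condexp.
by apply/funext => w; rewrite -expRB opprK addrC.
Qed.

Lemma bond_price_ae {t T : R} : 0 <= t -> t <= T -> T <= TT ->
  (Qx x0).-negligible [set w | Bp t T w <> affine_bond (T - t) (Xp t w)].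
Proof.
move=> t0 tT TTT; have ht : 0 <= t <= TT by rewrite t0 (le_trans tT).
exact: (is_condexp_ae_unique _ _ (filtration_sigma_algebra ht) (filtration_sub ht)
  (bond_condexp_Z t0 tT TTT) (bond_condexp Dx0 hU0 t0 tT TTT)).
Qed.

Lemma measurable_forward_density {T : R} : 0 <= T <= TT ->
  measurable_fun setT (fun w => Bp T T w / (expR (- (Xp T w).2) * Bp 0 T w)).
Proof.
move=> /andP[T0 TTT]; have hT : 0 <= T <= TT by rewrite T0 TTT.
have mBp t : 0 <= t -> t <= T -> measurable_fun setT (Bp t T).
  move=> t0 tT; have ht : 0 <= t <= TT by rewrite t0 (le_trans tT).
  exact: (meas_wrt_measurable (filtration_sub ht) (hBp _ _ t0 tT TTT).1).
have mZ : measurable_fun (T:=ST) setT (fun y : @state R k n => expR (- y.2)).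
  by state_measurable.
apply: measurable_funM; first exact: (mBp T T0 (lexx T)).
apply: (measurableT_comp measurable_inv); apply: measurable_funM.
  exact: measurable_Xp hT mZ.
exact: (mBp 0 (lexx 0) T0).
Qed.

Lemma forward_density_ae {T : R} : 0 <= T <= TT ->
  (Qx x0).-negligible [set w | Bp T T w / (expR (- (Xp T w).2) * Bp 0 T w) <>
                               expR (Xp T w).2 / affine_bond T x0].
Proof.
move=> /andP[T0 TTT]; have hT : 0 <= T <= TT by rewrite T0 TTT.
have initial : (Qx x0).-negligible [set w | Bp 0 T w <> affine_bond T x0].
  case: hM => _ start _ _.
  apply: (negligibleS _ (negligibleU (bond_price_ae (lexx 0) T0 TTT) (start x0 Dx0))).
  move=> w /= hw; have [X0|] := pselect (Xp 0 w = x0); last by right.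
  by left; rewrite subr0 X0.
have maturity : (Qx x0).-negligible [set w | Bp T T w <> 1].
  apply: (is_condexp_ae_unique _ _ (filtration_sigma_algebra hT) (filtration_sub hT)
    (hBp _ _ T0 (lexx T) TTT) (g2 := cst 1)).
  split; first exact/(meas_wrtP (filtration_sigma_algebra hT)).
  by move=> A _; apply: eq_integral => w _; rewrite divff // gt_eqF // expR_gt0.
apply: (negligibleS _ (negligibleU initial maturity)) => w /= hw.
have [B0|] := pselect (Bp 0 T w = affine_bond T x0); last by left.
have [BT|] := pselect (Bp T T w = 1); last by right.
by exfalso; apply: hw; rewrite B0 BT expRN div1r invfM invrK.
Qed.

Section spread.
Context {v : 'rV[R]_n} {Sp : R -> R -> Omega -> R}.
Hypothesis hUv : Ureal TT D Xp Qx 0 v 1.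
Hypothesis hSpT : forall T : R, 0 <= T <= TT ->
  forall w, Sp T T w = expR (dotv v (Xp T w).1.2).
Hypothesis hSp : forall t T : R, 0 <= t -> t <= T -> T <= TT ->
  is_condexp_dens (Qx x0) (fun w => Bp T T w / (expR (- (Xp T w).2) * Bp 0 T w))
    (F t) (Sp T T) (Sp t T).

Lemma spread_ae {t T : R} : 0 <= t -> t <= T -> T <= TT ->
  (Qx x0).-negligible [set w | Sp t T w <> affine_spread (T - t) v (Xp t w)].
Proof.
move=> t0 tT TTT; have ht : 0 <= t <= TT by rewrite t0 (le_trans tT).
have T0 := le_trans t0 tT; have hT : 0 <= T <= TT by rewrite T0 TTT.
set c := affine_bond T x0; have c0 : 0 < c by exact: expR_gt0.
have mZ : measurable_fun (T:=ST) setT (fun y : @state R k n => expR y.2).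
  by state_measurable.
have mW : measurable_fun setT (fun w => expR (Xp T w).2 / c).
  by apply: measurable_funM => //; exact: measurable_Xp hT mZ.
have mSpT : measurable_fun setT (Sp T T).
  have mY : measurable_fun (T:=ST) setT (fun y : @state R k n => expR (dotv v y.1.2)).
    by state_measurable.
  by rewrite (funext (hSpT _ hT)); exact: measurable_Xp hT mY.
have := is_condexp_dens_ae_dens (filtration_sub ht) (measurable_forward_density hT) mW mSpT
  (forward_density_ae hT) (hSp _ _ t0 tT TTT).
rewrite (funext (hSpT _ hT)) => hS.
exact: (is_condexp_dens_ae_unique _ _ (filtration_sigma_algebra ht) (filtration_sub ht)
  mW (fun w => divr_gt0 (expR_gt0 _) c0) (integrable_expR_Z Dx0 hU0 hT c0) hS
  (spread_condexp_dens Dx0 hUv hU0 c0 t0 tT TTT)).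
Qed.

Lemma spread_ratio_ae {t T : R} (g1 g2 : Omega -> R) : 0 <= t -> t <= T -> T <= TT ->
  is_condexp (Qx x0) (F t) (fun w => expR ((Xp T w).2 + dotv v (Xp T w).1.2)) g1 ->
  is_condexp (Qx x0) (F t) (fun w => expR (Xp T w).2) g2 ->
  (Qx x0).-negligible [set w | Sp t T w <> g1 w / g2 w].
Proof.
move=> t0 tT TTT hg1 hg2; have ht : 0 <= t <= TT by rewrite t0 (le_trans tT).
have sG := filtration_sigma_algebra ht; have Gm := filtration_sub ht.
have N1 : (Qx x0).-negligible [set w | g1 w <> exp_moment (T - t) v (Xp t w)].
  apply: (is_condexp_ae_unique _ _ sG Gm hg1); have := affine_condexp Dx0 hUv t0 tT TTT.
  by congr is_condexp; apply/funext => w; rewrite aff_expo_Y_Z addrC.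
have N2 : (Qx x0).-negligible [set w | g2 w <> exp_moment (T - t) 0 (Xp t w)].
  apply: (is_condexp_ae_unique _ _ sG Gm hg2); have := affine_condexp Dx0 hU0 t0 tT TTT.
  by congr is_condexp; apply/funext => w; rewrite aff_expo_Y_Z dot0v add0r.
apply: (negligibleS _ (negligibleU (negligibleU N1 N2) (spread_ae t0 tT TTT))).
move=> w /= hw; have [e1|] := pselect (g1 w = exp_moment (T - t) v (Xp t w)); last by left; left.
have [e2|] := pselect (g2 w = exp_moment (T - t) 0 (Xp t w)); last by left; right.
have [e3|] := pselect (Sp t T w = affine_spread (T - t) v (Xp t w)); last by right.
by exfalso; apply: hw; rewrite e1 e2 e3 exp_moment_spread mulfK // gt_eqF // expR_gt0.
Qed.

End spread.

End pricing.

End affine_model.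

Theorem proposition5p5 (R : realType) (d : measure_display) (Omega : measurableType d)
  (TT : R) (k n m : nat) (DX : set 'rV[R]_k)
  (F : R -> set (set Omega)) (Xp : R -> Omega -> @state R k n)
  (Qx : @state R k n -> probability Omega R)
  (phi : R -> 'rV[R]_k -> 'rV[R]_n -> R -> R)
  (psi : R -> 'rV[R]_k -> 'rV[R]_n -> R -> 'rV[R]_k)
  (u : 'I_m.+1 -> 'rV[R]_n) (l : R) (lam : 'rV[R]_k) (x0 : @state R k n)
  (Bp : R -> R -> Omega -> R) (S : 'I_m.+1 -> R -> R -> Omega -> R) :
  let D := [set s : @state R k n | DX s.1.1] in
  let Q := Qx x0 in
  let bank := fun t w => expR (- (Xp t w).2) in
  0 < TT ->
  closed DX -> convex_rV DX ->
  filtration TT F ->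
  markov_family TT F D Xp Qx ->
  stoch_continuous TT D Xp Qx ->
  affine_property TT D Xp Qx phi psi ->
  u ord0 = 0 ->
  (forall i, Ureal TT D Xp Qx 0 (u i) 1) ->
  short_rate TT D Xp Qx l lam ->
  D x0 -> x0.2 = 0 ->
  (forall t T, 0 <= t -> t <= T -> T <= TT ->
     is_condexp Q (F t) (fun w => bank t w / bank T w) (Bp t T)) ->
  (forall i : 'I_m.+1, (0 < i)%N -> forall T, 0 <= T <= TT -> forall w,
     S i T T w = expR (dotv (u i) (Xp T w).1.2)) ->
  (forall i : 'I_m.+1, (0 < i)%N -> forall t T, 0 <= t -> t <= T -> T <= TT ->
     is_condexp_dens Q (fun w => Bp T T w / (bank T w * Bp 0 T w)) (F t)
       (S i T T) (S i t T)) ->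
  forall t T, 0 <= t -> t <= T -> T <= TT ->
    [/\ is_condexp Q (F t) (fun w => expR ((Xp T w).2 - (Xp t w).2)) (Bp t T),
        Q.-negligible [set w | Bp t T w <>
           expR (phi (T - t) 0 0 1 + dotv (psi (T - t) 0 0 1) (Xp t w).1.1)] &
        forall i : 'I_m.+1, (0 < i)%N ->
          (forall g1 g2 : Omega -> R,
             is_condexp Q (F t) (fun w => expR ((Xp T w).2 + dotv (u i) (Xp T w).1.2)) g1 ->
             is_condexp Q (F t) (fun w => expR (Xp T w).2) g2 ->
             Q.-negligible [set w | S i t T w <> g1 w / g2 w]) /\
          Q.-negligible [set w | S i t T w <>
             expR (dotv (u i) (Xp t w).1.2 + phi (T - t) 0 (u i) 1 - phi (T - t) 0 0 1
                   + dotv (psi (T - t) 0 (u i) 1 - psi (T - t) 0 0 1) (Xp t w).1.1)]].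
Proof.
move=> D Q bank; rewrite {}/D {}/Q {}/bank.
move=> _ _ _ hF hM _ hA u0 hU _ Dx0 _ hBp hST hS t T t0 tT TTT.
have hU0 : Ureal TT [set s | DX s.1.1] Xp Qx 0 0 1 by rewrite -u0.
split; first exact: (bond_condexp_Z hBp t0 tT TTT).
  exact: (bond_price_ae hF hM hA Dx0 hU0 hBp t0 tT TTT).
move=> i i0; split => [g1 g2|].
  exact: (spread_ratio_ae hF hM hA Dx0 hU0 hBp (hU i) (hST i i0) (hS i i0) g1 g2 t0 tT TTT).
exact: (spread_ae hF hM hA Dx0 hU0 hBp (hU i) (hST i i0) (hS i i0) t0 tT TTT).
Qed.
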